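(* Fix an event set $\hat\Sigma$, a function $\hat\Sigma_{uc}:\hat\Sigma\to NCFD$, and a bi-fuzzy language $\hat M$ with $pr(\hat M)=\hat M$; controllability below is with respect to $\hat M$ and $\hat\Sigma_{uc}$. Let $\hat K_1,\hat K_2$ be bi-fuzzy languages over $\hat\Sigma$. Then: 1) if $\hat K_1$ and $\hat K_2$ are bi-fuzzy controllable, then $\hat K_1\cup\hat K_2$ is bi-fuzzy controllable; 2) if $pr(\hat K_1)=\hat K_1$ and $pr(\hat K_2)=\hat K_2$, then $pr(\hat K_1\cup\hat K_2)=\hat K_1\cup\hat K_2$; 3) if $\hat K_1$ and $\hat K_2$ are bi-fuzzy controllable and $pr(\hat K_1)\cap pr(\hat K_2)=pr(\hat K_1\cap\hat K_2)$, then $\hat K_1\cap\hat K_2$ is bi-fuzzy controllable; 4) if $pr(\hat K_i)=\hat K_i$ and $\hat K_i$ is bi-fuzzy controllable for $i=1,2$, then $pr(\hat K_1)\cap pr(\hat K_2)=pr(\hat K_1\cap\hat K_2)$ and $\hat K_1\cap\hat K_2$ is bi-fuzzy controllable.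
   Context: $NCFD$ is the set of normal convex type-1 fuzzy sets $\mu:[0,1]\to[0,1]$ ($\max_u\mu(u)=1$, and $\mu(u_j)\ge\min\{\mu(u_i),\mu(u_k)\}$ for $u_i\le u_j\le u_k$). Operations: $(\mu_1\sqcup\mu_2)(v)=\sup\{\min(\mu_1(u),\mu_2(w)):\max(u,w)=v\}$, $(\mu_1\sqcap\mu_2)(v)=\sup\{\min(\mu_1(u),\mu_2(w)):\min(u,w)=v\}$; for arbitrary families, $(\bigsqcup_{i\in I}\mu_i)(v)=\sup\{\inf_i\mu_i(u_i):\sup_i u_i=v\}$. $\mu_1\sqsubseteq\mu_2$ iff $\mu_1\sqcap\mu_2=\mu_1$. A bi-fuzzy language over $\hat\Sigma$ is a function $\hat\Sigma^*\to NCFD$; $(\hat L\cap\hat H)(s)=\hat L(s)\sqcap\hat H(s)$, $(\hat L\cup\hat H)(s)=\hat L(s)\sqcup\hat H(s)$, $\hat L\subseteq\hat H$ iff $\hat L(s)\sqsubseteq\hat H(s)$ for all $s$. Prefix closure: $pr(\hat K)(s)=\bigsqcup_{u\in\hat\Sigma^*}\hat K(su)$. A bi-fuzzy language $\hat K$ with $\hat K\subseteq\hat M$ is bi-fuzzy controllable (w.r.t. $\hat M$ and $\hat\Sigma_{uc}$) if for all $s\in\hat\Sigma^*$, $\sigma\in\hat\Sigma$: $pr(\hat K)(s)\sqcap\hat\Sigma_{uc}(\sigma)\sqcap\hat M(s\sigma)\sqsubseteq pr(\hat K)(s\sigma)$. *)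

From Stdlib Require Import Reals List.
From Coquelicot Require Import Coquelicot.
Open Scope R_scope.

Definition I01 : Type := { x : R | 0 <= x <= 1 }.
Definition ival (u : I01) : R := proj1_sig u.

Definition fuzzy : Type := I01 -> R.

(* total supremum / infimum of a set of reals (meaningful for nonempty bounded sets) *)
Definition fsup (E : R -> Prop) : R := real (Lub_Rbar E).
Definition finf (E : R -> Prop) : R := real (Glb_Rbar E).

Definition is_NCFD (mu : fuzzy) : Prop :=
  (forall u, 0 <= mu u <= 1) /\
  (exists u, mu u = 1) /\
  (forall ui uj uk : I01, ival ui <= ival uj <= ival uk ->
      Rmin (mu ui) (mu uk) <= mu uj).

Definition fjoin (mu1 mu2 : fuzzy) : fuzzy := fun v =>
  fsup (fun r => exists u w : I01,
          Rmax (ival u) (ival w) = ival v /\ r = Rmin (mu1 u) (mu2 w)).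
Definition fmeet (mu1 mu2 : fuzzy) : fuzzy := fun v =>
  fsup (fun r => exists u w : I01,
          Rmin (ival u) (ival w) = ival v /\ r = Rmin (mu1 u) (mu2 w)).

Definition fbigjoin {I : Type} (mu : I -> fuzzy) : fuzzy := fun v =>
  fsup (fun r => exists uu : I -> I01,
          fsup (fun x => exists i, x = ival (uu i)) = ival v /\
          r = finf (fun y => exists i, y = mu i (uu i))).

Definition fle (mu1 mu2 : fuzzy) : Prop := fmeet mu1 mu2 = mu1.

Definition lang (Sigma : Type) : Type := list Sigma -> fuzzy.

Definition linter {Sigma} (L H : lang Sigma) : lang Sigma := fun s => fmeet (L s) (H s).
Definition lunion {Sigma} (L H : lang Sigma) : lang Sigma := fun s => fjoin (L s) (H s).
Definition lsub {Sigma} (L H : lang Sigma) : Prop := forall s, fle (L s) (H s).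

Definition pr {Sigma} (K : lang Sigma) : lang Sigma :=
  fun s => fbigjoin (fun u : list Sigma => K (s ++ u)).

Definition controllable {Sigma} (M : lang Sigma) (Suc : Sigma -> fuzzy) (K : lang Sigma) : Prop :=
  lsub K M /\
  forall (s : list Sigma) (a : Sigma),
    fle (fmeet (fmeet (pr K s) (Suc a)) (M (s ++ a :: nil))) (pr K (s ++ a :: nil)).

(* Every operation involved is a supremum, so each inequality [X <= Y] is proved level by
   level: for [r < X] one extracts points at which the operands exceed [r] and reassembles
   them into a witness that [Y >= r].  In this way the meet is commutative, associative and
   idempotent, it distributes over the join when its right operand is convex, and the join is
   monotone for [fle] on convex sets.  Prefix closure commutes with unions, and with
   intersections of prefix-closed convex languages, where the empty suffix pins the point.
   Controllability of [K1 ∪ K2] follows by distributing the controllability inequality over the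
   two components; controllability of [K1 ∩ K2] only uses the meet-semilattice laws. *)

From Stdlib Require Import Reals List Lra.
From Stdlib Require Import FunctionalExtensionality ProofIrrelevance.
From Stdlib Require Import IndefiniteDescription Classical.
From Coquelicot Require Import Coquelicot.
Open Scope R_scope.

Ltac minmax :=
  unfold Rmin, Rmax in *;
  repeat match goal with
  | |- context [Rle_dec ?a ?b] => destruct (Rle_dec a b)
  | H : context [Rle_dec ?a ?b] |- _ => destruct (Rle_dec a b)
  end; lra.

Lemma Rmin_idem (x : R) : Rmin x x = x.
Proof. minmax. Qed.

Lemma Rmax_idem (x : R) : Rmax x x = x.
Proof. minmax. Qed.

Lemma Rmin_sel (x y : R) : Rmin x y = x \/ Rmin x y = y.
Proof. unfold Rmin; destruct (Rle_dec x y); auto. Qed.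

Lemma Rmax_sel (x y : R) : Rmax x y = x \/ Rmax x y = y.
Proof. unfold Rmax; destruct (Rle_dec x y); auto. Qed.

Lemma Rle_by_levels (x y : R) : (forall r, r < x -> r <= y) -> x <= y.
Proof.
  intros H. destruct (Rle_lt_dec x y) as [|Hyx]; [assumption|].
  specialize (H ((x + y) / 2)). lra.
Qed.

Lemma is_lub_approx (E : R -> Prop) (l r : R) :
  is_lub E l -> r < l -> exists x, E x /\ r < x.
Proof.
  intros [_ Hleast] Hr. apply NNPP. intros Hnone.
  assert (l <= r); [|lra].
  apply Hleast. intros x Hx. apply Rnot_lt_le. intros Hrx. apply Hnone. eauto.
Qed.

Lemma fsup_is_lub (E : R -> Prop) (x0 m : R) :
  E x0 -> is_upper_bound E m -> is_lub E (fsup E).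
Proof.
  intros Hx0 Hm. unfold fsup.
  destruct (Lub_Rbar_correct E) as [Hub Hleast]; revert Hub Hleast.
  destruct (Lub_Rbar E) as [l| |]; intros Hub Hleast.
  - split; [exact Hub | intros b Hb; exact (Hleast (Finite b) Hb)].
  - contradiction (Hleast (Finite m) Hm).
  - contradiction (Hub x0 Hx0).
Qed.

Definition is_lower_bound (E : R -> Prop) (m : R) : Prop := forall x, E x -> m <= x.

Definition is_glb (E : R -> Prop) (m : R) : Prop :=
  is_lower_bound E m /\ (forall b, is_lower_bound E b -> b <= m).

Lemma finf_is_glb (E : R -> Prop) (x0 m : R) :
  E x0 -> is_lower_bound E m -> is_glb E (finf E).
Proof.
  intros Hx0 Hm. unfold finf.
  destruct (Glb_Rbar_correct E) as [Hlb Hgreatest]; revert Hlb Hgreatest.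
  destruct (Glb_Rbar E) as [l| |]; intros Hlb Hgreatest.
  - split; [exact Hlb | intros b Hb; exact (Hgreatest (Finite b) Hb)].
  - contradiction (Hlb x0 Hx0).
  - contradiction (Hgreatest (Finite m) Hm).
Qed.

Lemma ival_inj (u w : I01) : ival u = ival w -> u = w.
Proof.
  destruct u as [x Hx], w as [y Hy]; simpl; intros ->.
  f_equal. apply proof_irrelevance.
Qed.

Lemma ival_bounds (u : I01) : 0 <= ival u <= 1.
Proof. exact (proj2_sig u). Qed.

Lemma Rmin_ival_bounds (u w : I01) : 0 <= Rmin (ival u) (ival w) <= 1.
Proof. pose proof (ival_bounds u); pose proof (ival_bounds w); minmax. Qed.

Lemma Rmax_ival_bounds (u w : I01) : 0 <= Rmax (ival u) (ival w) <= 1.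
Proof. pose proof (ival_bounds u); pose proof (ival_bounds w); minmax. Qed.

Definition I01min (u w : I01) : I01 := exist _ _ (Rmin_ival_bounds u w).
Definition I01max (u w : I01) : I01 := exist _ _ (Rmax_ival_bounds u w).

Definition ival_range {I : Type} (uu : I -> I01) : R -> Prop :=
  fun x => exists i, x = ival (uu i).

Definition ival_sup {I : Type} (uu : I -> I01) (v : I01) : Prop :=
  (forall i, ival (uu i) <= ival v) /\
  (forall b, (forall i, ival (uu i) <= b) -> ival v <= b).

Section Supremum.
Context {I : Type} (i0 : I).

Lemma ival_range_lub (uu : I -> I01) : is_lub (ival_range uu) (fsup (ival_range uu)).
Proof.
  apply (fsup_is_lub _ (ival (uu i0)) 1).
  - exists i0; reflexivity.
  - intros x [i ->]. apply ival_bounds.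
Qed.

Lemma fsup_ival_range (uu : I -> I01) (v : I01) :
  fsup (ival_range uu) = ival v <-> ival_sup uu v.
Proof.
  destruct (ival_range_lub uu) as [Hub Hleast]. unfold ival_sup. split.
  - intros <-. split.
    + intros i. apply Hub. exists i; reflexivity.
    + intros b Hb. apply Hleast. intros x [i ->]. apply Hb.
  - intros [Hvub Hvleast]. apply Rle_antisym.
    + apply Hleast. intros x [i ->]. apply Hvub.
    + apply Hvleast. intros i. apply Hub. exists i; reflexivity.
Qed.

Lemma fsup_ival_range_bounds (uu : I -> I01) : 0 <= fsup (ival_range uu) <= 1.
Proof.
  destruct (ival_range_lub uu) as [Hub Hleast]. split.
  - apply Rle_trans with (ival (uu i0)); [apply ival_bounds | apply Hub; exists i0; reflexivity].
  - apply Hleast. intros x [i ->]. apply ival_bounds.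
Qed.

Definition I01sup (uu : I -> I01) : I01 := exist _ _ (fsup_ival_range_bounds uu).

Lemma ival_sup_I01sup (uu : I -> I01) : ival_sup uu (I01sup uu).
Proof. apply fsup_ival_range. reflexivity. Qed.

Lemma ival_sup_const (v : I01) : ival_sup (fun _ : I => v) v.
Proof. split; [intros; lra | intros b Hb; exact (Hb i0)]. Qed.

End Supremum.

Lemma ival_sup_max {I : Type} (x y : I -> I01) (p q v : I01) :
  ival_sup x p -> ival_sup y q -> Rmax (ival p) (ival q) = ival v ->
  ival_sup (fun i => I01max (x i) (y i)) v.
Proof.
  intros [Hxp Hpx] [Hyq Hqy] Hv. split; simpl.
  - intros i. specialize (Hxp i); specialize (Hyq i). minmax.
  - intros b Hb. rewrite <- Hv.
    apply Rmax_lub; [apply Hpx | apply Hqy]; intros i; specialize (Hb i); minmax.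
Qed.

Lemma ival_sup_min {I : Type} (y : I -> I01) (v' v : I01) :
  ival_sup y v' -> ival v <= ival v' -> ival_sup (fun i => I01min (y i) v) v.
Proof.
  intros [_ Hleast] Hvv'. split; simpl.
  - intros i. minmax.
  - intros b Hb. destruct (Rle_lt_dec (ival v) b) as [|Hbv]; [assumption|].
    assert (ival v' <= b); [|lra].
    apply Hleast. intros i. specialize (Hb i). minmax.
Qed.

Definition fbounded01 (f : fuzzy) : Prop := forall u, 0 <= f u <= 1.

Definition fconvex (f : fuzzy) : Prop :=
  forall ui uj uk : I01, ival ui <= ival uj <= ival uk -> Rmin (f ui) (f uk) <= f uj.

Lemma NCFD_fbounded01 (mu : fuzzy) : is_NCFD mu -> fbounded01 mu.
Proof. intros [H _]; exact H. Qed.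

Lemma NCFD_fconvex (mu : fuzzy) : is_NCFD mu -> fconvex mu.
Proof. intros (_ & _ & H); exact H. Qed.

(* [fmeet] and [fjoin] are [fextend Rmin] and [fextend Rmax] up to unfolding. *)
Definition fextend (op : R -> R -> R) (f g : fuzzy) : fuzzy := fun v =>
  fsup (fun r => exists u w : I01, op (ival u) (ival w) = ival v /\ r = Rmin (f u) (g w)).

Section Extension.
Variable op : R -> R -> R.
Hypothesis op_idem : forall x, op x x = x.

Lemma fextend_is_lub (f g : fuzzy) (v : I01) : fbounded01 f -> fbounded01 g ->
  is_lub (fun r => exists u w : I01, op (ival u) (ival w) = ival v /\ r = Rmin (f u) (g w))
         (fextend op f g v).
Proof.
  intros Hf Hg. apply (fsup_is_lub _ (Rmin (f v) (g v)) 1).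
  - exists v, v. rewrite op_idem. split; reflexivity.
  - intros r (u & w & _ & ->). specialize (Hf u). specialize (Hg w). minmax.
Qed.

Lemma fextend_ge (f g : fuzzy) (u w v : I01) (r : R) : fbounded01 f -> fbounded01 g ->
  op (ival u) (ival w) = ival v -> r <= f u -> r <= g w -> r <= fextend op f g v.
Proof.
  intros Hf Hg Huw Hu Hw. apply Rle_trans with (Rmin (f u) (g w)); [now apply Rmin_glb|].
  apply (fextend_is_lub f g v Hf Hg). eauto.
Qed.

Lemma fextend_approx (f g : fuzzy) (v : I01) (r : R) : fbounded01 f -> fbounded01 g ->
  r < fextend op f g v -> exists u w, op (ival u) (ival w) = ival v /\ r < f u /\ r < g w.
Proof.
  intros Hf Hg Hr.
  destruct (is_lub_approx _ _ r (fextend_is_lub f g v Hf Hg) Hr) as (x & (u & w & Huw & ->) & Hx).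
  exists u, w. split; [exact Huw | minmax].
Qed.

Lemma fextend_bounded01 (f g : fuzzy) : fbounded01 f -> fbounded01 g -> fbounded01 (fextend op f g).
Proof.
  intros Hf Hg v. split.
  - apply (fextend_ge f g v v); [assumption | assumption | apply op_idem | apply Hf | apply Hg].
  - apply Rle_by_levels. intros r Hr.
    destruct (fextend_approx f g v r Hf Hg Hr) as (u & _ & _ & Hu & _).
    specialize (Hf u). lra.
Qed.

Lemma fextend_idem (f : fuzzy) : (forall x y, op x y = x \/ op x y = y) ->
  fbounded01 f -> fextend op f f = f.
Proof.
  intros Hsel Hf. extensionality v. apply Rle_antisym.
  - apply Rle_by_levels. intros r Hr.
    destruct (fextend_approx f f v r Hf Hf Hr) as (u & w & Huw & Hu & Hw).
    destruct (Hsel (ival u) (ival w)) as [E | E]; rewrite E in Huw;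
      apply ival_inj in Huw; subst; lra.
  - apply (fextend_ge f f v v); auto using Rle_refl.
Qed.

Lemma fextend_comm (f g : fuzzy) : (forall x y, op x y = op y x) ->
  fbounded01 f -> fbounded01 g -> fextend op f g = fextend op g f.
Proof.
  intros Hcomm.
  assert (Hle : forall f g v, fbounded01 f -> fbounded01 g -> fextend op f g v <= fextend op g f v).
  { intros f' g' v Hf Hg. apply Rle_by_levels. intros r Hr.
    destruct (fextend_approx f' g' v r Hf Hg Hr) as (u & w & Huw & Hu & Hw).
    apply (fextend_ge g' f' w u); [assumption | assumption | rewrite Hcomm; exact Huw | lra | lra].
  }
  intros Hf Hg. extensionality v. apply Rle_antisym; apply Hle; assumption.
Qed.

Lemma fextend_family_approx {I : Type} (f g : I -> fuzzy) (uu : I -> I01) (r : R) :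
  (forall i, fbounded01 (f i)) -> (forall i, fbounded01 (g i)) ->
  (forall i, r < fextend op (f i) (g i) (uu i)) ->
  exists p q : I -> I01, forall i,
    op (ival (p i)) (ival (q i)) = ival (uu i) /\ r < f i (p i) /\ r < g i (q i).
Proof.
  intros Hf Hg Hr.
  destruct (functional_choice (fun i (pq : I01 * I01) =>
      op (ival (fst pq)) (ival (snd pq)) = ival (uu i) /\ r < f i (fst pq) /\ r < g i (snd pq)))
    as [F HF].
  { intros i. destruct (fextend_approx (f i) (g i) (uu i) r (Hf i) (Hg i) (Hr i)) as (u & w & H).
    exists (u, w). exact H. }
  exists (fun i => fst (F i)), (fun i => snd (F i)). exact HF.
Qed.

End Extension.

Lemma fmeet_ge (f g : fuzzy) (u w v : I01) (r : R) : fbounded01 f -> fbounded01 g ->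
  Rmin (ival u) (ival w) = ival v -> r <= f u -> r <= g w -> r <= fmeet f g v.
Proof. exact (fextend_ge Rmin Rmin_idem f g u w v r). Qed.

Lemma fjoin_ge (f g : fuzzy) (u w v : I01) (r : R) : fbounded01 f -> fbounded01 g ->
  Rmax (ival u) (ival w) = ival v -> r <= f u -> r <= g w -> r <= fjoin f g v.
Proof. exact (fextend_ge Rmax Rmax_idem f g u w v r). Qed.

Lemma fmeet_approx (f g : fuzzy) (v : I01) (r : R) : fbounded01 f -> fbounded01 g ->
  r < fmeet f g v -> exists u w, Rmin (ival u) (ival w) = ival v /\ r < f u /\ r < g w.
Proof. exact (fextend_approx Rmin Rmin_idem f g v r). Qed.

Lemma fjoin_approx (f g : fuzzy) (v : I01) (r : R) : fbounded01 f -> fbounded01 g ->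
  r < fjoin f g v -> exists u w, Rmax (ival u) (ival w) = ival v /\ r < f u /\ r < g w.
Proof. exact (fextend_approx Rmax Rmax_idem f g v r). Qed.

Lemma fmeet_bounded01 (f g : fuzzy) : fbounded01 f -> fbounded01 g -> fbounded01 (fmeet f g).
Proof. exact (fextend_bounded01 Rmin Rmin_idem f g). Qed.

Lemma fjoin_bounded01 (f g : fuzzy) : fbounded01 f -> fbounded01 g -> fbounded01 (fjoin f g).
Proof. exact (fextend_bounded01 Rmax Rmax_idem f g). Qed.

#[local] Hint Resolve fmeet_bounded01 fjoin_bounded01 : core.

Lemma fmeet_idem (f : fuzzy) : fbounded01 f -> fmeet f f = f.
Proof. exact (fextend_idem Rmin Rmin_idem f Rmin_sel). Qed.

Lemma fjoin_idem (f : fuzzy) : fbounded01 f -> fjoin f f = f.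
Proof. exact (fextend_idem Rmax Rmax_idem f Rmax_sel). Qed.

Lemma fmeet_comm (f g : fuzzy) : fbounded01 f -> fbounded01 g -> fmeet f g = fmeet g f.
Proof. exact (fextend_comm Rmin Rmin_idem f g Rmin_comm). Qed.

Lemma fjoin_comm (f g : fuzzy) : fbounded01 f -> fbounded01 g -> fjoin f g = fjoin g f.
Proof. exact (fextend_comm Rmax Rmax_idem f g Rmax_comm). Qed.

Lemma fmeet_assoc (f g h : fuzzy) : fbounded01 f -> fbounded01 g -> fbounded01 h ->
  fmeet (fmeet f g) h = fmeet f (fmeet g h).
Proof.
  intros Hf Hg Hh. extensionality v. apply Rle_antisym; apply Rle_by_levels; intros r Hr.
  - destruct (fmeet_approx _ _ v r (fmeet_bounded01 f g Hf Hg) Hh Hr) as (p & z & Hpz & Hp & Hz).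
    destruct (fmeet_approx _ _ p r Hf Hg Hp) as (x & y & Hxy & Hx & Hy).
    apply (fmeet_ge _ _ x (I01min y z)); auto; [simpl; minmax | lra |].
    apply (fmeet_ge _ _ y z); auto; lra.
  - destruct (fmeet_approx _ _ v r Hf (fmeet_bounded01 g h Hg Hh) Hr) as (x & q & Hxq & Hx & Hq).
    destruct (fmeet_approx _ _ q r Hg Hh Hq) as (y & z & Hyz & Hy & Hz).
    apply (fmeet_ge _ _ (I01min x y) z); auto; [simpl; minmax | | lra].
    apply (fmeet_ge _ _ x y); auto; lra.
Qed.

Lemma fmeetACA (a b c d : fuzzy) :
  fbounded01 a -> fbounded01 b -> fbounded01 c -> fbounded01 d ->
  fmeet (fmeet a b) (fmeet c d) = fmeet (fmeet a c) (fmeet b d).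
Proof.
  intros Ha Hb Hc Hd.
  rewrite (fmeet_assoc a b), <- (fmeet_assoc b c d), (fmeet_comm b c), (fmeet_assoc c b d),
    <- (fmeet_assoc a c); auto.
Qed.

Lemma fmeetIIl (a b c : fuzzy) : fbounded01 a -> fbounded01 b -> fbounded01 c ->
  fmeet (fmeet a b) c = fmeet (fmeet a c) (fmeet b c).
Proof. intros Ha Hb Hc. rewrite fmeetACA, fmeet_idem; auto. Qed.

Lemma fmeet_fconvex (f g : fuzzy) : fbounded01 f -> fbounded01 g ->
  fconvex f -> fconvex g -> fconvex (fmeet f g).
Proof.
  intros Hf Hg Cf Cg v1 v v2 Hv. apply Rle_by_levels. intros r Hr.
  assert (Hr1 : r < fmeet f g v1) by minmax. assert (Hr2 : r < fmeet f g v2) by minmax.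
  destruct (fmeet_approx _ _ _ r Hf Hg Hr1) as (x1 & w1 & E1 & Hx1 & Hw1).
  destruct (fmeet_approx _ _ _ r Hf Hg Hr2) as (x2 & w2 & E2 & Hx2 & Hw2).
  destruct (Rle_dec (ival x1) (ival v)).
  - apply (fmeet_ge _ _ v w2); auto; [minmax | | lra].
    apply Rle_trans with (Rmin (f x1) (f x2)); [apply Rmin_glb; lra | apply Cf; minmax].
  - apply (fmeet_ge _ _ x1 v); auto; [minmax | lra |].
    apply Rle_trans with (Rmin (g w1) (g w2)); [apply Rmin_glb; lra | apply Cg; minmax].
Qed.

Lemma fmeet_fjoin_le (a b c : fuzzy) (v : I01) : fbounded01 a -> fbounded01 b -> fbounded01 c ->
  fmeet (fjoin a b) c v <= fjoin (fmeet a c) (fmeet b c) v.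
Proof.
  intros Ha Hb Hc. apply Rle_by_levels. intros r Hr.
  destruct (fmeet_approx _ _ v r (fjoin_bounded01 a b Ha Hb) Hc Hr) as (p & w & Hpw & Hp & Hw).
  destruct (fjoin_approx _ _ p r Ha Hb Hp) as (x & y & Hxy & Hx & Hy).
  destruct (Rle_dec (ival y) (ival x)).
  - apply (fjoin_ge _ _ v (I01min y w)); auto; [simpl; minmax | |].
    + apply (fmeet_ge _ _ x w); auto; [minmax | lra | lra].
    + apply (fmeet_ge _ _ y w); auto; lra.
  - apply (fjoin_ge _ _ (I01min x w) v); auto; [simpl; minmax | |].
    + apply (fmeet_ge _ _ x w); auto; lra.
    + apply (fmeet_ge _ _ y w); auto; [minmax | lra | lra].
Qed.

Lemma fmeet_fjoin_ge_level (a b c : fuzzy) (x y w1 w2 v : I01) (r : R) :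
  fbounded01 a -> fbounded01 b -> fbounded01 c -> fconvex c ->
  r < a x -> r < b y -> r < c w1 -> r < c w2 ->
  Rmin (ival x) (ival w1) = ival v -> Rmin (ival y) (ival w2) <= ival v ->
  r <= fmeet (fjoin a b) c v.
Proof.
  intros Ha Hb Hc Cc Hx Hy Hw1 Hw2 Hxw1 Hyw2.
  assert (Hxy : r <= fjoin a b (I01max x y)) by (apply (fjoin_ge _ _ x y); auto; lra).
  destruct (Rle_dec (ival x) (ival w1)).
  - destruct (Rle_dec (ival y) (ival v)).
    + apply (fmeet_ge _ _ v w1); auto; [minmax | | lra].
      apply (fjoin_ge _ _ x y); auto; [minmax | lra | lra].
    + apply (fmeet_ge _ _ (I01max x y) v); auto; [simpl; minmax |].
      apply Rle_trans with (Rmin (c w2) (c w1)); [apply Rmin_glb; lra | apply Cc; minmax].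
  - apply (fmeet_ge _ _ (I01max x y) w1); auto; [simpl; minmax | lra].
Qed.

Lemma fmeet_fjoinDl (a b c : fuzzy) : fbounded01 a -> fbounded01 b -> fbounded01 c -> fconvex c ->
  fmeet (fjoin a b) c = fjoin (fmeet a c) (fmeet b c).
Proof.
  intros Ha Hb Hc Cc. extensionality v. apply Rle_antisym; [apply fmeet_fjoin_le; assumption|].
  apply Rle_by_levels. intros r Hr.
  destruct (fjoin_approx _ _ v r (fmeet_bounded01 a c Ha Hc) (fmeet_bounded01 b c Hb Hc) Hr)
    as (p & q & Hpq & Hp & Hq).
  destruct (fmeet_approx _ _ p r Ha Hc Hp) as (x & w1 & Hxw1 & Hx & Hw1).
  destruct (fmeet_approx _ _ q r Hb Hc Hq) as (y & w2 & Hyw2 & Hy & Hw2).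
  destruct (Rle_dec (ival q) (ival p)).
  - apply (fmeet_fjoin_ge_level a b c x y w1 w2); auto; minmax.
  - rewrite fjoin_comm by assumption.
    apply (fmeet_fjoin_ge_level b a c y x w2 w1); auto; minmax.
Qed.

Lemma fle_intro (f g : fuzzy) : fbounded01 f -> fbounded01 g ->
  (forall v u, ival v <= ival u -> Rmin (f u) (g v) <= f v) ->
  (forall v r, r < f v -> exists w, ival v <= ival w /\ r < g w) -> fle f g.
Proof.
  intros Hf Hg Hdown Hdom. unfold fle. extensionality v.
  apply Rle_antisym; apply Rle_by_levels; intros r Hr.
  - destruct (fmeet_approx _ _ v r Hf Hg Hr) as (u & w & Huw & Hu & Hw).
    destruct (Rle_dec (ival u) (ival w)).
    + replace v with u by (apply ival_inj; minmax). lra.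
    + replace v with w by (apply ival_inj; minmax).
      assert (Rmin (f u) (g w) <= f w) by (apply Hdown; lra). minmax.
  - destruct (Hdom v r Hr) as (w & Hvw & Hw).
    apply (fmeet_ge _ _ v w); auto; [minmax | lra | lra].
Qed.

Lemma fle_downward (f g : fuzzy) (u v : I01) : fbounded01 f -> fbounded01 g -> fle f g ->
  ival v <= ival u -> Rmin (f u) (g v) <= f v.
Proof.
  intros Hf Hg L Hvu. apply Rle_trans with (fmeet f g v); [|rewrite L; apply Rle_refl].
  apply (fmeet_ge _ _ u v); auto; [minmax | apply Rmin_l | apply Rmin_r].
Qed.

Lemma fle_dominated (f g : fuzzy) (v : I01) (r : R) : fbounded01 f -> fbounded01 g -> fle f g ->
  r < f v -> exists w, ival v <= ival w /\ r < g w.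
Proof.
  intros Hf Hg L Hr. rewrite <- L in Hr.
  destruct (fmeet_approx _ _ v r Hf Hg Hr) as (u & w & Huw & _ & Hw).
  exists w. split; [minmax | exact Hw].
Qed.

Lemma fle_level_below (f g : fuzzy) (x p v : I01) (r : R) : fbounded01 f -> fbounded01 g ->
  fle f g -> r < f x -> r < g p -> ival p <= ival v -> exists a, ival a <= ival v /\ r < f a.
Proof.
  intros Hf Hg L Hx Hp Hpv.
  destruct (Rle_dec (ival x) (ival v)); [exists x; auto|].
  exists p. split; [exact Hpv|].
  assert (Rmin (f x) (g p) <= f p) by (apply fle_downward; auto; lra).
  minmax.
Qed.

Lemma fle_fjoin2 (f1 f2 g1 g2 : fuzzy) :
  fbounded01 f1 -> fbounded01 f2 -> fbounded01 g1 -> fbounded01 g2 -> fconvex f1 -> fconvex f2 ->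
  fle f1 g1 -> fle f2 g2 -> fle (fjoin f1 f2) (fjoin g1 g2).
Proof.
  intros Hf1 Hf2 Hg1 Hg2 C1 C2 L1 L2. apply fle_intro; auto.
  - intros v u Hvu. apply Rle_by_levels. intros r Hr.
    assert (Hu : r < fjoin f1 f2 u) by minmax. assert (Hv : r < fjoin g1 g2 v) by minmax.
    destruct (fjoin_approx _ _ u r Hf1 Hf2 Hu) as (x & y & Hxy & Hx & Hy).
    destruct (fjoin_approx _ _ v r Hg1 Hg2 Hv) as (p & q & Hpq & Hp & Hq).
    destruct (fle_level_below f1 g1 x p v r) as (a1 & Ha1 & Hra1); auto; [minmax|].
    destruct (fle_level_below f2 g2 y q v r) as (a2 & Ha2 & Hra2); auto; [minmax|].
    destruct (Rle_dec (ival v) (ival x)).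
    + apply (fjoin_ge _ _ v a2); auto; [minmax | | lra].
      apply Rle_trans with (Rmin (f1 a1) (f1 x)); [apply Rmin_glb; lra | apply C1; lra].
    + apply (fjoin_ge _ _ a1 v); auto; [minmax | lra |].
      apply Rle_trans with (Rmin (f2 a2) (f2 y)); [apply Rmin_glb; lra | apply C2; minmax].
  - intros v r Hr. destruct (fjoin_approx _ _ v r Hf1 Hf2 Hr) as (x & y & Hxy & Hx & Hy).
    destruct (fle_dominated f1 g1 x r) as (w1 & Hxw1 & Hw1); auto.
    destruct (fle_dominated f2 g2 y r) as (w2 & Hyw2 & Hw2); auto.
    exists (I01max w1 w2). split; [simpl; minmax|].
    apply Rlt_le_trans with (Rmin (g1 w1) (g2 w2)); [apply Rmin_glb_lt; assumption|].
    apply (fjoin_ge _ _ w1 w2); auto; [apply Rmin_l | apply Rmin_r].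
Qed.

Lemma fle_fjoin_lub (f g h : fuzzy) : fbounded01 f -> fbounded01 g -> fbounded01 h ->
  fconvex f -> fconvex g -> fle f h -> fle g h -> fle (fjoin f g) h.
Proof. intros. rewrite <- (fjoin_idem h) by assumption. apply fle_fjoin2; assumption. Qed.

Lemma fle_fmeet2 (f1 f2 g1 g2 : fuzzy) :
  fbounded01 f1 -> fbounded01 f2 -> fbounded01 g1 -> fbounded01 g2 ->
  fle f1 g1 -> fle f2 g2 -> fle (fmeet f1 f2) (fmeet g1 g2).
Proof. intros Hf1 Hf2 Hg1 Hg2 L1 L2. unfold fle. rewrite fmeetACA, L1, L2; auto. Qed.

Lemma fle_fmeetl (f g h : fuzzy) : fbounded01 f -> fbounded01 g -> fbounded01 h ->
  fle f h -> fle (fmeet f g) h.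
Proof.
  intros Hf Hg Hh L. unfold fle.
  rewrite fmeet_assoc, (fmeet_comm g h), <- fmeet_assoc, L; auto.
Qed.

Section BigJoin.
Context {I : Type} (i0 : I) (mu : I -> fuzzy).
Hypothesis Hmu : forall i, fbounded01 (mu i).

Lemma fbigjoin_level_glb (uu : I -> I01) :
  is_glb (fun y => exists i, y = mu i (uu i)) (finf (fun y => exists i, y = mu i (uu i))).
Proof.
  apply (finf_is_glb _ (mu i0 (uu i0)) 0).
  - exists i0; reflexivity.
  - intros y [i ->]. apply Hmu.
Qed.

Lemma fbigjoin_is_lub (v : I01) :
  is_lub (fun r => exists uu, fsup (ival_range uu) = ival v /\
                              r = finf (fun y => exists i, y = mu i (uu i)))
         (fbigjoin mu v).
Proof.
  apply (fsup_is_lub _ (finf (fun y => exists i, y = mu i v)) 1).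
  - exists (fun _ => v). split; [apply (fsup_ival_range i0), ival_sup_const, i0 | reflexivity].
  - intros r (uu & _ & ->). apply Rle_trans with (mu i0 (uu i0)); [|apply Hmu].
    apply (fbigjoin_level_glb uu). exists i0; reflexivity.
Qed.

Lemma fbigjoin_ge (uu : I -> I01) (v : I01) (r : R) :
  ival_sup uu v -> (forall i, r <= mu i (uu i)) -> r <= fbigjoin mu v.
Proof.
  intros Huu Hr. apply Rle_trans with (finf (fun y => exists i, y = mu i (uu i))).
  - apply (fbigjoin_level_glb uu). intros y [i ->]. apply Hr.
  - apply (fbigjoin_is_lub v). exists uu.
    split; [apply (fsup_ival_range i0); exact Huu | reflexivity].
Qed.

Lemma fbigjoin_approx (v : I01) (r : R) :
  r < fbigjoin mu v -> exists uu, ival_sup uu v /\ forall i, r < mu i (uu i).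
Proof.
  intros Hr. destruct (is_lub_approx _ _ r (fbigjoin_is_lub v) Hr) as (x & (uu & Huu & ->) & Hx).
  exists uu. split; [apply (fsup_ival_range i0); exact Huu|].
  intros i. apply Rlt_le_trans with (1 := Hx). apply (fbigjoin_level_glb uu). exists i; reflexivity.
Qed.

Lemma fbigjoin_bounded01 : fbounded01 (fbigjoin mu).
Proof.
  intros v. split.
  - apply (fbigjoin_ge (fun _ => v)); [apply ival_sup_const, i0 | intros i; apply Hmu].
  - apply Rle_by_levels. intros r Hr.
    destruct (fbigjoin_approx v r Hr) as (uu & _ & Hruu).
    specialize (Hruu i0). specialize (Hmu i0 (uu i0)). lra.
Qed.

Lemma fbigjoin_fconvex : (forall i, fconvex (mu i)) -> fconvex (fbigjoin mu).
Proof.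
  intros Cmu v1 v v2 Hv. apply Rle_by_levels. intros r Hr.
  assert (Hr1 : r < fbigjoin mu v1) by minmax. assert (Hr2 : r < fbigjoin mu v2) by minmax.
  destruct (fbigjoin_approx v1 r Hr1) as (x & [Hxv1 _] & Hrx).
  destruct (fbigjoin_approx v2 r Hr2) as (y & Hyv2 & Hry).
  (* cut the family [y] down to [v]; where it is cut, use convexity between [x i] and [y i] *)
  apply (fbigjoin_ge (fun i => I01min (y i) v)); [apply (ival_sup_min y v2); [exact Hyv2 | lra] |].
  intros i. destruct (Rle_dec (ival (y i)) (ival v)).
  - replace (I01min (y i) v) with (y i) by (apply ival_inj; simpl; minmax).
    specialize (Hry i). lra.
  - replace (I01min (y i) v) with v by (apply ival_inj; simpl; minmax).
    apply Rle_trans with (Rmin (mu i (x i)) (mu i (y i))).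
    + specialize (Hrx i); specialize (Hry i). apply Rmin_glb; lra.
    + apply Cmu. specialize (Hxv1 i). lra.
Qed.

End BigJoin.

Lemma fbigjoin_fjoin {I : Type} (i0 : I) (f g : I -> fuzzy) :
  (forall i, fbounded01 (f i)) -> (forall i, fbounded01 (g i)) ->
  fbigjoin (fun i => fjoin (f i) (g i)) = fjoin (fbigjoin f) (fbigjoin g).
Proof.
  intros Hf Hg. assert (Hfg : forall i, fbounded01 (fjoin (f i) (g i))) by auto.
  extensionality v. apply Rle_antisym; apply Rle_by_levels; intros r Hr.
  - destruct (fbigjoin_approx i0 _ Hfg v r Hr) as (uu & [Huv Hvu] & Hruu).
    destruct (fextend_family_approx Rmax Rmax_idem f g uu r Hf Hg Hruu) as (p & q & Hpq).
    destruct (ival_sup_I01sup i0 p) as [HpP HPp]. destruct (ival_sup_I01sup i0 q) as [HqQ HQq].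
    apply (fjoin_ge _ _ (I01sup i0 p) (I01sup i0 q));
      [apply fbigjoin_bounded01; assumption .. | | |].
    + apply Rle_antisym.
      * apply Rmax_lub; [apply HPp | apply HQq];
          intros i; destruct (Hpq i) as [E _]; specialize (Huv i); minmax.
      * apply Hvu. intros i. destruct (Hpq i) as [E _]. rewrite <- E.
        specialize (HpP i). specialize (HqQ i). minmax.
    + apply (fbigjoin_ge i0 f Hf p); [apply ival_sup_I01sup | intros i; destruct (Hpq i); lra].
    + apply (fbigjoin_ge i0 g Hg q); [apply ival_sup_I01sup | intros i; destruct (Hpq i); lra].
  - destruct (fjoin_approx _ _ v r (fbigjoin_bounded01 i0 f Hf) (fbigjoin_bounded01 i0 g Hg) Hr)
      as (p & q & Hpq & Hp & Hq).
    destruct (fbigjoin_approx i0 f Hf p r Hp) as (x & Hx & Hrx).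
    destruct (fbigjoin_approx i0 g Hg q r Hq) as (y & Hy & Hry).
    apply (fbigjoin_ge i0 _ Hfg (fun i => I01max (x i) (y i))); [eapply ival_sup_max; eauto|].
    intros i. apply (fjoin_ge _ _ (x i) (y i)); auto; apply Rlt_le; [apply Hrx | apply Hry].
Qed.

#[local] Hint Resolve fbigjoin_bounded01 : core.

Lemma pr_bounded01 {Sigma : Type} (K : lang Sigma) :
  (forall s, fbounded01 (K s)) -> forall s, fbounded01 (pr K s).
Proof. intros HK s. apply (fbigjoin_bounded01 nil). intros u. apply HK. Qed.

Lemma pr_fconvex {Sigma : Type} (K : lang Sigma) :
  (forall s, fbounded01 (K s)) -> (forall s, fconvex (K s)) -> forall s, fconvex (pr K s).
Proof. intros HK CK s. apply (fbigjoin_fconvex nil); intros u; auto. Qed.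

#[local] Hint Resolve pr_bounded01 pr_fconvex fmeet_fconvex : core.

Lemma pr_lunion {Sigma : Type} (K1 K2 : lang Sigma) :
  (forall s, fbounded01 (K1 s)) -> (forall s, fbounded01 (K2 s)) ->
  pr (lunion K1 K2) = lunion (pr K1) (pr K2).
Proof.
  intros H1 H2. extensionality s.
  exact (fbigjoin_fjoin nil (fun u => K1 (s ++ u)) (fun u => K2 (s ++ u))
                        (fun u => H1 _) (fun u => H2 _)).
Qed.

Section PrefixClosedIntersection.
Context {Sigma : Type} (K1 K2 : lang Sigma).
Hypotheses (H1 : forall s, fbounded01 (K1 s)) (H2 : forall s, fbounded01 (K2 s)).
Hypotheses (E1 : pr K1 = K1) (E2 : pr K2 = K2).

Lemma linter_bounded01 : forall s, fbounded01 (linter K1 K2 s).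
Proof. intros s. apply fmeet_bounded01; auto. Qed.

Lemma pr_linter_le (s : list Sigma) (v : I01) :
  (forall s, fconvex (K1 s)) -> (forall s, fconvex (K2 s)) ->
  pr (linter K1 K2) s v <= linter K1 K2 s v.
Proof.
  intros C1 C2. apply Rle_by_levels. intros r Hr.
  destruct (fbigjoin_approx nil _ (fun u => linter_bounded01 (s ++ u)) v r Hr)
    as (uu & [Huv Hvu] & Hruu).
  destruct (fextend_family_approx Rmin Rmin_idem (fun u => K1 (s ++ u)) (fun u => K2 (s ++ u))
              uu r (fun u => H1 _) (fun u => H2 _) Hruu) as (p & q & Hpq).
  destruct (ival_sup_I01sup nil p) as [HpP _]. destruct (ival_sup_I01sup nil q) as [HqQ _].
  set (P := I01sup nil p) in *. set (Q := I01sup nil q) in *.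
  assert (HP : r <= K1 s P).
  { rewrite <- E1. apply (fbigjoin_ge nil _ (fun u => H1 _) p); [apply ival_sup_I01sup|].
    intros u. destruct (Hpq u); lra. }
  assert (HQ : r <= K2 s Q).
  { rewrite <- E2. apply (fbigjoin_ge nil _ (fun u => H2 _) q); [apply ival_sup_I01sup|].
    intros u. destruct (Hpq u); lra. }
  assert (HvP : ival v <= ival P).
  { apply Hvu. intros u. destruct (Hpq u) as [E _]. specialize (HpP u). minmax. }
  assert (HvQ : ival v <= ival Q).
  { apply Hvu. intros u. destruct (Hpq u) as [E _]. specialize (HqQ u). minmax. }
  (* the empty suffix puts a point of level [r] below [v] in [K1 s] or in [K2 s] *)
  destruct (Hpq nil) as (E0 & Hp0 & Hq0). rewrite app_nil_r in Hp0, Hq0. specialize (Huv nil).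
  unfold linter. destruct (Rle_dec (ival (p nil)) (ival (q nil))).
  - apply (fmeet_ge _ _ v Q); auto; [minmax|].
    apply Rle_trans with (Rmin (K1 s (p nil)) (K1 s P)); [apply Rmin_glb; lra | apply C1; minmax].
  - apply (fmeet_ge _ _ P v); auto; [minmax|].
    apply Rle_trans with (Rmin (K2 s (q nil)) (K2 s Q)); [apply Rmin_glb; lra | apply C2; minmax].
Qed.

Lemma pr_linter_ge (s : list Sigma) (v : I01) :
  linter K1 K2 s v <= pr (linter K1 K2) s v.
Proof.
  apply Rle_by_levels. intros r Hr.
  destruct (fmeet_approx _ _ v r (H1 s) (H2 s) Hr) as (p & q & Hpq & Hp & Hq).
  rewrite <- E1 in Hp. rewrite <- E2 in Hq.
  destruct (fbigjoin_approx nil _ (fun u => H1 _) p r Hp) as (x & [Hxp _] & Hrx).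
  destruct (fbigjoin_approx nil _ (fun u => H2 _) q r Hq) as (y & [Hyq _] & Hry).
  set (z := fun u : list Sigma => match u with nil => v | _ => I01min (x u) (y u) end).
  apply (fbigjoin_ge nil _ (fun u => linter_bounded01 (s ++ u)) z).
  - split.
    + intros [|c u]; simpl; [lra|]. specialize (Hxp (c :: u)). specialize (Hyq (c :: u)). minmax.
    + intros b Hb. exact (Hb nil).
  - intros [|c u]; simpl.
    + rewrite app_nil_r. lra.
    + apply (fmeet_ge _ _ (x (c :: u)) (y (c :: u))); auto; apply Rlt_le; [apply Hrx | apply Hry].
Qed.

Lemma pr_linter_prefix_closed :
  (forall s, fconvex (K1 s)) -> (forall s, fconvex (K2 s)) -> pr (linter K1 K2) = linter K1 K2.
Proof.
  intros C1 C2. extensionality s. extensionality v.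
  apply Rle_antisym; [apply pr_linter_le | apply pr_linter_ge]; assumption.
Qed.

End PrefixClosedIntersection.

Section Controllability.
Context {Sigma : Type} (M : lang Sigma) (Suc : Sigma -> fuzzy) (K1 K2 : lang Sigma).
Hypotheses (HSuc : forall a, fbounded01 (Suc a)) (HM : forall s, fbounded01 (M s)).
Hypotheses (H1 : forall s, fbounded01 (K1 s)) (H2 : forall s, fbounded01 (K2 s)).

Lemma controllable_lunion :
  (forall a, fconvex (Suc a)) -> (forall s, fconvex (M s)) ->
  (forall s, fconvex (K1 s)) -> (forall s, fconvex (K2 s)) ->
  controllable M Suc K1 -> controllable M Suc K2 -> controllable M Suc (lunion K1 K2).
Proof.
  intros CSuc CM C1 C2 [Hsub1 Hctl1] [Hsub2 Hctl2]. split.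
  - intros s. apply fle_fjoin_lub; auto.
  - intros s a. rewrite pr_lunion by assumption. unfold lunion.
    rewrite !fmeet_fjoinDl by auto.
    apply fle_fjoin2; auto.
Qed.

Lemma controllable_linter :
  controllable M Suc K1 -> controllable M Suc K2 ->
  linter (pr K1) (pr K2) = pr (linter K1 K2) -> controllable M Suc (linter K1 K2).
Proof.
  intros [Hsub1 Hctl1] [_ Hctl2] Hpr. split.
  - intros s. apply fle_fmeetl; auto.
  - intros s a. rewrite <- Hpr. unfold linter.
    specialize (Hctl1 s a). specialize (Hctl2 s a).
    rewrite fmeet_assoc in Hctl1, Hctl2 by auto.
    rewrite (fmeet_assoc (fmeet (pr K1 s) (pr K2 s))), fmeetIIl by auto.
    apply fle_fmeet2; auto.
Qed.

End Controllability.

Theorem proposition5 (Sigma : Type) (Suc : Sigma -> fuzzy) (M K1 K2 : lang Sigma)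
  (HSuc : forall a, is_NCFD (Suc a))
  (HM : forall s, is_NCFD (M s))
  (HMpr : pr M = M)
  (HK1 : forall s, is_NCFD (K1 s))
  (HK2 : forall s, is_NCFD (K2 s)) :
  (controllable M Suc K1 -> controllable M Suc K2 ->
     controllable M Suc (lunion K1 K2)) /\
  (pr K1 = K1 -> pr K2 = K2 -> pr (lunion K1 K2) = lunion K1 K2) /\
  (controllable M Suc K1 -> controllable M Suc K2 ->
     linter (pr K1) (pr K2) = pr (linter K1 K2) ->
     controllable M Suc (linter K1 K2)) /\
  (pr K1 = K1 -> pr K2 = K2 ->
     controllable M Suc K1 -> controllable M Suc K2 ->
     linter (pr K1) (pr K2) = pr (linter K1 K2) /\
     controllable M Suc (linter K1 K2)).
Proof.
  pose proof (fun a => NCFD_fbounded01 _ (HSuc a)) as BSuc.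
  pose proof (fun s => NCFD_fbounded01 _ (HM s)) as BM.
  pose proof (fun s => NCFD_fbounded01 _ (HK1 s)) as B1.
  pose proof (fun s => NCFD_fbounded01 _ (HK2 s)) as B2.
  pose proof (fun a => NCFD_fconvex _ (HSuc a)) as CSuc.
  pose proof (fun s => NCFD_fconvex _ (HM s)) as CM.
  pose proof (fun s => NCFD_fconvex _ (HK1 s)) as C1.
  pose proof (fun s => NCFD_fconvex _ (HK2 s)) as C2.
  split; [|split; [|split]].
  - apply controllable_lunion; assumption.
  - intros E1 E2. rewrite pr_lunion, E1, E2 by assumption. reflexivity.
  - apply controllable_linter; assumption.
  - intros E1 E2 Hctl1 Hctl2.
    assert (Hpr : linter (pr K1) (pr K2) = pr (linter K1 K2))
      by (rewrite pr_linter_prefix_closed, E1, E2 by assumption; reflexivity).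
    split; [exact Hpr | apply controllable_linter; assumption].
Qed.
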